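(* Consider DIVIDING. For all $n\in \mathbb{N}$, $\mathcal{SG}(n)=\Omega_2(n)$.
   Context: DIVIDING is the impartial normal-play game on positive integers (heaps) where a move replaces a heap $n$ by $m\ge 2$ equal heaps $k$ with $km=n$, the resulting heaps being played as a disjunctive sum; a heap of size $1$ is terminal. $\mathcal{SG}$ denotes the Sprague-Grundy value (mex rule; nim-sum for disjunctive sums). $\Omega_2(n)$ is the number of prime factors of $n$ where the odd primes are counted with multiplicity and the prime $2$ is counted without multiplicity (i.e. at most once). *)

From mathcomp Require Import all_boot.
Set Implicit Arguments. Unset Strict Implicit. Unset Printing Implicit Defensive.

Definition mex (s : seq nat) : nat :=
  find (fun i => i \notin s) (iota 0 (size s).+1).

Definition nimsum (s : seq nat) : nat := foldr Nat.lxor 0 s.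

(* A move replaces heap n by m >= 2 equal heaps of size k with k*m = n;
   the resulting position is a disjunctive sum of m copies of heap k,
   whose SG value is the nim-sum of m copies of SG(k).
   Fuel f >= n is always sufficient since k < n. *)
Fixpoint sg_fuel (f n : nat) : nat :=
  match f with
  | 0 => 0
  | f'.+1 =>
      mex [seq nimsum (nseq m (sg_fuel f' (n %/ m)))
          | m <- iota 2 n.-1 & m %| n]
  end.

Definition SG (n : nat) : nat := sg_fuel n n.

Definition Omega2 (n : nat) : nat :=
  (2 %| n) + \sum_(p <- primes n | p != 2) logn p n.

From Stdlib Require Import PeanoNat.
From mathcomp Require Import all_boot zify.
Set Implicit Arguments. Unset Strict Implicit.

(* Splitting n into m equal heaps is an option of Grundy value SG (n / m) for
   odd m and 0 for even m, since equal values cancel in a nim-sum.  Write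
   Omega2 n = [2 | n] + oddOmega n, where oddOmega counts odd prime factors
   with multiplicity.  By strong induction SG = Omega2 below n, so an odd
   split m > 1 yields Omega2 n - oddOmega m < Omega2 n, an even split yields
   0 < Omega2 n, and conversely every value below Omega2 n occurs: 0 via
   m = 2 when n is even, the others via odd divisors m, which realise every
   oddOmega value from 1 to oddOmega n.  Hence mex = Omega2 n. *)

Definition oddOmega (n : nat) : nat := \sum_(p <- primes n | p != 2) logn p n.

Lemma Omega2E n : Omega2 n = (2 %| n) + oddOmega n.
Proof. by []. Qed.

Lemma oddOmega_widen n N : n < N ->
  oddOmega n = \sum_(0 <= p < N | p != 2) logn p n.
Proof.
move=> ltnN; rewrite /oddOmega -(filter_pi_of ltnN) big_filter_cond big_mkcondl.
apply: eq_bigr => p _; case: ifPn => // p_n.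
by apply/esym/eqP; rewrite -leqn0 leqNgt logn_gt0.
Qed.

Lemma oddOmegaM a b : 0 < a -> 0 < b ->
  oddOmega (a * b) = oddOmega a + oddOmega b.
Proof.
move=> a_gt0 b_gt0; have ab_gt0 : 0 < a * b by rewrite muln_gt0 a_gt0.
rewrite !(@oddOmega_widen _ (a * b).+1) ?ltnS ?leq_pmull ?leq_pmulr //.
by rewrite -big_split; apply: eq_bigr => p _; apply: lognM.
Qed.

Lemma oddOmega1 : oddOmega 1 = 0.
Proof. by rewrite /oddOmega big_nil. Qed.

Lemma oddOmega_prime p : prime p -> odd p -> oddOmega p = 1.
Proof.
move=> p_pr p_odd; have p_neq2 : p != 2 by apply: contraTneq p_odd => ->.
by rewrite /oddOmega primes_prime // big_cons big_nil p_neq2 logn_prime ?eqxx.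
Qed.

Lemma exists_odd_prime_dvdn n :
  0 < oddOmega n -> exists2 p, prime p & odd p && (p %| n).
Proof.
move=> Omega_pos.
have /hasP[p p_n p_neq2] : has (predC1 2) (primes n).
  apply: contraLR Omega_pos => /hasPn no_odd; rewrite -leqNgt leqn0.
  rewrite /oddOmega big1_seq // => p /andP[p_neq2 /no_odd].
  by rewrite /= p_neq2.
move: p_n; rewrite mem_primes => /and3P[p_pr _ p_dvd]; exists p => //.
by case: (even_prime p_pr) p_neq2 => [->|->].
Qed.

Lemma oddOmega_gt0 m : odd m -> 1 < m -> 0 < oddOmega m.
Proof.
move=> m_odd m_gt1; have [p p_pr p_dvd] := pdivP m_gt1.
have p_odd : odd p by move: m_odd; rewrite -(divnK p_dvd) oddM => /andP[].
have q_gt0 : 0 < m %/ p by rewrite divn_gt0 ?prime_gt0 // dvdn_leq // ltnW.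
rewrite -(divnK p_dvd) oddOmegaM ?(prime_gt0 p_pr) //.
by rewrite (oddOmega_prime p_pr p_odd) addn1.
Qed.

Lemma exists_odd_dvdn_oddOmega n k : 0 < n -> k <= oddOmega n ->
  exists d, [/\ odd d, d %| n & oddOmega d = k].
Proof.
elim: k n => [|k IHk] n n_gt0 k_le; first by exists 1; rewrite dvd1n oddOmega1.
have [p p_pr /andP[p_odd p_dvd]] :=
  exists_odd_prime_dvdn (leq_ltn_trans (leq0n k) k_le).
have q_gt0 : 0 < n %/ p by rewrite divn_gt0 ?prime_gt0 // dvdn_leq.
move: k_le; rewrite -(divnK p_dvd) oddOmegaM ?(prime_gt0 p_pr) //.
rewrite (oddOmega_prime p_pr p_odd) addn1 ltnS.
move=> /(IHk _ q_gt0)[d [d_odd d_dvd <-]].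
exists (d * p); split; first by rewrite oddM d_odd.
  by rewrite dvdn_pmul2r ?prime_gt0.
rewrite oddOmegaM ?(dvdn_gt0 q_gt0 d_dvd) ?(prime_gt0 p_pr) //.
by rewrite (oddOmega_prime p_pr p_odd) addn1.
Qed.

Lemma Omega2_divn_odd n m : 0 < n -> odd m -> m %| n ->
  Omega2 n = Omega2 (n %/ m) + oddOmega m.
Proof.
move=> n_gt0 m_odd m_dvd; have m_gt0 := dvdn_gt0 n_gt0 m_dvd.
have q_gt0 : 0 < n %/ m by rewrite divn_gt0 // dvdn_leq.
rewrite !Omega2E -addnA -oddOmegaM // divnK //.
by rewrite -{1}(divnK m_dvd) Euclid_dvdM // [2 %| m]dvdn2 m_odd orbF.
Qed.

Lemma nimsum_nseq m x : nimsum (nseq m x) = if odd m then x else 0.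
Proof.
elim: m => [|m IHm] //=; rewrite /nimsum /= -/(nimsum _) IHm.
by case: (odd m); rewrite /= ?Nat.lxor_nilpotent ?Nat.lxor_0_r.
Qed.

Lemma mex_eq s v : (forall i, i < v -> i \in s) -> v \notin s -> mex s = v.
Proof.
move=> below_v v_notin.
have v_le : v <= size s.
  rewrite -(size_iota 0 v) uniq_leq_size ?iota_uniq // => i.
  by rewrite mem_iota add0n => /below_v.
rewrite /mex -(subnKC v_le) -addnS iotaD find_cat.
have -> : has (fun i => i \notin s) (iota 0 v) = false.
  by apply/hasPn => i; rewrite mem_iota add0n => /below_v ->.
by rewrite size_iota /= v_notin addn0.
Qed.

(* The option "m heaps of size n %/ m", valued with SG = Omega2 below n. *)
Definition split_value (n m : nat) : nat :=
  if odd m then Omega2 (n %/ m) else 0.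

Lemma split_value_lt n m : 0 < n -> m %| n -> 1 < m ->
  split_value n m < Omega2 n.
Proof.
move=> n_gt0 m_dvd m_gt1; rewrite /split_value; case: ifP => m_odd.
  rewrite (Omega2_divn_odd n_gt0 m_odd m_dvd) -[X in X < _]addn0 ltn_add2l.
  exact: oddOmega_gt0.
by rewrite Omega2E (dvdn_trans _ m_dvd) // dvdn2 m_odd.
Qed.

Lemma split_value_onto n i : 0 < n -> i < Omega2 n ->
  exists2 m, (m %| n) && (1 < m) & split_value n m = i.
Proof.
move=> n_gt0 i_lt.
have [/andP[two_dvd /eqP ->]|] := boolP ((2 %| n) && (i == 0)).
  by exists 2; rewrite ?two_dvd.
move=> i_ge; have k_le : Omega2 n - i <= oddOmega n.
  by move: i_lt i_ge; rewrite Omega2E; case: (2 %| n) => /=; lia.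
have [d [d_odd d_dvd d_Omega]] := exists_odd_dvdn_oddOmega n_gt0 k_le.
have d_gt1 : 1 < d.
  rewrite ltn_neqAle eq_sym (dvdn_gt0 n_gt0 d_dvd) andbT.
  apply: contraTneq i_lt => d_eq1.
  by move: d_Omega; rewrite d_eq1 oddOmega1; lia.
exists d; first by rewrite d_dvd.
have := Omega2_divn_odd n_gt0 d_odd d_dvd.
by rewrite /split_value d_odd d_Omega; lia.
Qed.

Lemma mem_split_moves n m : 0 < n ->
  (m \in [seq m <- iota 2 n.-1 | m %| n]) = (m %| n) && (1 < m).
Proof.
move=> n_gt0; rewrite mem_filter mem_iota; have [m_dvd|] //= := boolP (m %| n).
by have := dvdn_leq n_gt0 m_dvd; lia.
Qed.

Lemma mex_split_values n : 0 < n ->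
  mex [seq split_value n m | m <- iota 2 n.-1 & m %| n] = Omega2 n.
Proof.
move=> n_gt0; apply: mex_eq => [i /(split_value_onto n_gt0)[m m_move <-]|].
  by apply: map_f; rewrite mem_split_moves.
apply/mapP=> -[m]; rewrite mem_split_moves // => /andP[m_dvd m_gt1] /eqP.
by rewrite eq_sym ltn_eqF ?split_value_lt.
Qed.

Lemma sg_fuel_Omega2 f n : 0 < n -> n <= f -> sg_fuel f n = Omega2 n.
Proof.
elim: f n => [|f IHf] n n_gt0 n_le; first by move: n_le; rewrite leqNgt n_gt0.
rewrite /= -(mex_split_values n_gt0); congr mex; apply/eq_in_map => m.
rewrite mem_split_moves // => /andP[m_dvd m_gt1].
have m_gt0 : 0 < m by apply: ltnW.
have q_gt0 : 0 < n %/ m by rewrite divn_gt0 // dvdn_leq.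
have q_lt : n %/ m < n by rewrite ltn_Pdiv.
by rewrite nimsum_nseq /split_value IHf // -ltnS (leq_trans q_lt n_le).
Qed.

Theorem mainTheorem9 (n : nat) : 0 < n -> SG n = Omega2 n.
Proof. by move=> n_gt0; apply: sg_fuel_Omega2. Qed.
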